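(* Let $P=(|P|,\preccurlyeq)$ be a finite poset with a bicoloring, and fix a reference total ordering of $|P|$. Then the sign-imbalance of $P$ (number of even linearizations minus number of odd linearizations) equals the number of even linearizations compatible with the bicoloring minus the number of odd linearizations compatible with the bicoloring. In particular, if $P$ has no linearization compatible with the given bicoloring, then $P$ is sign-balanced (its sign-imbalance is $0$).
   Context: A linearization of a finite poset $P$ with $n$ elements is a total order on $|P|$ refining $\preccurlyeq$. Given a fixed reference ordering $q_1,\dots,q_n$ of $|P|$, a linearization listing the elements as $q_{\sigma(1)}<\dots<q_{\sigma(n)}$ is called even or odd according to whether the permutation $\sigma$ is even or odd. A bicoloring of $P$ is a partition of $|P|$ into two color classes such that whenever one element covers another (i.e. $x\preccurlyeq y$, $x\neq y$, no element strictly between), they have opposite colors. A linearization is compatible with the bicoloring if any two elements that are consecutive in the linearization have opposite colors. *)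

From HB Require Import structures.
From mathcomp Require Import all_boot all_order all_algebra all_fingroup.
Set Implicit Arguments. Unset Strict Implicit. Unset Printing Implicit Defensive.

(* A finite poset with n elements: carrier 'I_n, order relation le.
   The reference ordering q_1,...,q_n is the natural order of 'I_n. *)
Definition is_partial_order n (le : rel 'I_n) : Prop :=
  [/\ reflexive le, antisymmetric le & transitive le].

Definition covers n (le : rel 'I_n) (x y : 'I_n) : bool :=
  [&& le x y, x != y & ~~ [exists z, [&& le x z, le z y, z != x & z != y]]].

Definition is_bicoloring n (le : rel 'I_n) (color : 'I_n -> bool) : Prop :=
  forall x y, covers le x y -> color x != color y.

(* s lists the elements as s 0 < s 1 < ... < s (n-1) (positions -> elements);
   it is a linearization iff it refines le *)
Definition is_linearization n (le : rel 'I_n) (s : 'S_n) : bool :=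
  [forall i, forall j, le (s i) (s j) ==> (i <= j)].

Definition compatible n (color : 'I_n -> bool) (s : 'S_n) : bool :=
  [forall i : 'I_n, forall j : 'I_n, (val j == (val i).+1) ==> (color (s i) != color (s j))].

Definition n_even_lin n (le : rel 'I_n) : nat :=
  #|[set s : 'S_n | is_linearization le s & ~~ odd_perm s]|.
Definition n_odd_lin n (le : rel 'I_n) : nat :=
  #|[set s : 'S_n | is_linearization le s & odd_perm s]|.

Definition sign_imbalance n (le : rel 'I_n) : int :=
  (n_even_lin le)%:Z - (n_odd_lin le)%:Z.

Definition n_even_comp n (le : rel 'I_n) (color : 'I_n -> bool) : nat :=
  #|[set s : 'S_n | [&& is_linearization le s, compatible color s & ~~ odd_perm s]]|.
Definition n_odd_comp n (le : rel 'I_n) (color : 'I_n -> bool) : nat :=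
  #|[set s : 'S_n | [&& is_linearization le s, compatible color s & odd_perm s]]|.

From HB Require Import structures.
From mathcomp Require Import all_boot all_order all_algebra all_fingroup.
From mathcomp Require Import zify.

(* A linearization that is not compatible with the bicoloring has a first pair
   of monochromatic consecutive positions i, i+1.  The elements there are
   incomparable: otherwise one would cover the other (nothing can sit between
   consecutive positions of a linearization), contradicting the bicoloring.
   So swapping them yields another incompatible linearization of opposite
   sign with the same first monochromatic pair, and this sign-reversing
   involution cancels all incompatible linearizations in the imbalance. *)

Set Implicit Arguments. Unset Strict Implicit. Unset Printing Implicit Defensive.

Lemma card_sign_involution (T : finType) (B p : pred T) (f : T -> T) :
  {in B, forall x, B (f x)} -> {in B, involutive f} ->
  {in B, forall x, p (f x) = ~~ p x} ->
  #|[set x | B x & ~~ p x]| = #|[set x | B x & p x]|.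
Proof.
move=> fB fK fp; rewrite -(card_in_imset (f := f)); last first.
  by move=> x y; rewrite !inE => /andP[Bx _] /andP[By _] fxy; rewrite -(fK x Bx) fxy fK.
apply: eq_card => y; apply/imsetP/idP => [[x] | ].
  by rewrite !inE => /andP[Bx px] ->; rewrite fB // fp // px.
rewrite inE => /andP[By py]; exists (f y); last by rewrite fK.
by rewrite inE fB // fp // py.
Qed.

Lemma card_split_pred (T : finType) (A C P : pred T) :
  #|[set x | A x & P x]| =
  (#|[set x | [&& A x, C x & P x]]| + #|[set x | A x && ~~ C x & P x]|)%N.
Proof.
rewrite -(cardsID [set x | C x]); congr (_ + _)%N;
  by apply: eq_card => x; rewrite !inE; case: (A x); case: (C x); case: (P x).
Qed.

Section ConsecutivePositions.
Variables (n : nat) (le : rel 'I_n) (s : 'S_n).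
Hypothesis s_lin : is_linearization le s.

Lemma linearization_le_pos (a b : 'I_n) : le (s a) (s b) -> a <= b.
Proof. exact: implyP (forallP (forallP s_lin a) b). Qed.

Lemma linearization_consecutive_covers (i j : 'I_n) :
  j = i.+1 :> nat -> le (s i) (s j) -> covers le (s i) (s j).
Proof.
move=> ej le_ij; apply/and3P; split => //.
  by rewrite (inj_eq perm_inj) -val_eqE /= ej (ltn_eqF (ltnSn _)).
apply/existsP => -[z /and4P[h1 h2 h3 h4]].
rewrite -(permKV s z) in h1 h2 h3 h4.
move: (linearization_le_pos h1) (linearization_le_pos h2) h3 h4.
by rewrite !(inj_eq perm_inj) -!val_eqE /=; lia.
Qed.

Lemma linearization_swap_consecutive (i j : 'I_n) :
  j = i.+1 :> nat -> ~~ le (s i) (s j) ->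
  is_linearization le (tperm i j * s)%g.
Proof.
move=> ej nle_ij.
have nle_ji : ~~ le (s j) (s i) by apply/negP => /linearization_le_pos; lia.
have val_neq (x y : 'I_n) : x <> y -> x <> y :> nat by move=> + /val_inj.
apply/forallP => a; apply/forallP => b; apply/implyP; rewrite !permM => le_ab.
have := linearization_le_pos le_ab.
case: tpermP => [ea|ea|na1 na2]; case: tpermP => [eb|eb|nb1 nb2]; subst => //;
  rewrite ?tpermL ?tpermR in le_ab; rewrite ?le_ab in nle_ij nle_ji => //;
  repeat match goal with H : _ <> _ |- _ => move/val_neq: H => H end; lia.
Qed.

End ConsecutivePositions.

Section FirstMonochromaticStep.
Variables (n : nat) (color : 'I_n -> bool).

Definition mono_step (s : 'S_n) (p : 'I_n * 'I_n) : bool :=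
  (p.2 == p.1.+1 :> nat) && (color (s p.1) == color (s p.2)).

Definition first_mono_step (s : 'S_n) (p : 'I_n * 'I_n) : bool :=
  mono_step s p && [forall q, mono_step s q ==> (p.1 <= q.1)].

Definition swap_first_mono (s : 'S_n) : 'S_n :=
  if [pick p | first_mono_step s p] is Some p then (tperm p.1 p.2 * s)%g else s.

Lemma compatibleN (s : 'S_n) : ~~ compatible color s = [exists p, mono_step s p].
Proof.
apply/idP/existsP => [/forallPn [i /forallPn [j]] | [[i j] /andP[e c]]].
  by rewrite negb_imply negbK => /andP[e c]; exists (i, j); rewrite /mono_step /= e c.
apply/negP => /forallP /(_ i) /forallP /(_ j).
by rewrite e /= (eqP c) eqxx.
Qed.

Lemma first_mono_step_exists (s : 'S_n) :
  ~~ compatible color s -> exists p, first_mono_step s p.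
Proof.
rewrite compatibleN => /existsP [p0 mono_p0].
have [p mono_p min_p] := arg_minnP (fun p : 'I_n * 'I_n => nat_of_ord p.1) mono_p0.
by exists p; rewrite /first_mono_step mono_p; apply/forallP => q; apply/implyP/min_p.
Qed.

Lemma first_mono_step_uniq (s : 'S_n) (p q : 'I_n * 'I_n) :
  first_mono_step s p -> first_mono_step s q -> p = q.
Proof.
case: p q => [i j] [i' j'] /andP[mono_ij /forallP min_ij].
move=> /andP[mono_ij' /forallP min_ij'].
have ei : i = i' :> nat.
  by apply/eqP; rewrite eqn_leq (implyP (min_ij (i', j'))) ?(implyP (min_ij' (i, j))).
case/andP: mono_ij => /= /eqP ej _; case/andP: mono_ij' => /= /eqP ej' _.
by congr (_, _); apply: val_inj; rewrite /= ?ej ?ej' ei.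
Qed.

Lemma swap_first_monoE (s : 'S_n) (p : 'I_n * 'I_n) :
  first_mono_step s p -> swap_first_mono s = (tperm p.1 p.2 * s)%g.
Proof.
move=> first_p; rewrite /swap_first_mono; case: pickP => [q first_q | /(_ p)].
  by rewrite (first_mono_step_uniq first_q first_p).
by rewrite first_p.
Qed.

(* The swap fixes all positions below i and exchanges two equal colors, so no
   earlier monochromatic step can appear. *)
Lemma first_mono_step_tperm (s : 'S_n) (i j : 'I_n) :
  first_mono_step s (i, j) -> first_mono_step (tperm i j * s)%g (i, j).
Proof.
move=> /andP[/andP[/= /eqP ej /eqP c_ij] /forallP min_ij].
apply/andP; split.
  by rewrite /mono_step /= !permM tpermL tpermR ej c_ij !eqxx.
apply/forallP => -[a b]; apply/implyP => /andP[/= /eqP eab].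
rewrite leqNgt; apply: contraTN => ai.
have [i_a j_a] : i != a /\ j != a by rewrite -!val_eqE /=; lia.
rewrite !permM (tpermD i_a j_a).
case: tpermP => [eb|eb|b_i b_j].
- subst b; rewrite -c_ij; apply/negP => /eqP c_ai.
  have := implyP (min_ij (a, i)); rewrite /mono_step /= eab c_ai !eqxx.
  by move=> /(_ isT); lia.
- by move: eab; rewrite eb ej; lia.
- apply/negP => c_ab.
  have := implyP (min_ij (a, b)); rewrite /mono_step /= eab c_ab eqxx.
  by move=> /(_ isT); lia.
Qed.

Lemma swap_first_monoK (s : 'S_n) :
  ~~ compatible color s -> swap_first_mono (swap_first_mono s) = s.
Proof.
move=> /first_mono_step_exists [[i j] first_ij].
rewrite (swap_first_monoE first_ij) (swap_first_monoE (first_mono_step_tperm first_ij)).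
by rewrite mulgA tperm2 mul1g.
Qed.

Lemma swap_first_mono_incompatible (s : 'S_n) :
  ~~ compatible color s -> ~~ compatible color (swap_first_mono s).
Proof.
move=> /first_mono_step_exists [[i j] first_ij].
rewrite (swap_first_monoE first_ij) compatibleN; apply/existsP; exists (i, j).
by case/andP: (first_mono_step_tperm first_ij).
Qed.

Lemma odd_swap_first_mono (s : 'S_n) :
  ~~ compatible color s -> odd_perm (swap_first_mono s) = ~~ odd_perm s.
Proof.
move=> /first_mono_step_exists [[i j] first_ij].
rewrite (swap_first_monoE first_ij) odd_permM odd_tperm /=.
case/andP: first_ij => /andP[/= /eqP ej _] _.
by have -> : i != j by rewrite -val_eqE /= ej (ltn_eqF (ltnSn _)).
Qed.

Lemma linearization_swap_first_mono (le : rel 'I_n) (s : 'S_n) :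
  is_bicoloring le color -> is_linearization le s -> ~~ compatible color s ->
  is_linearization le (swap_first_mono s).
Proof.
move=> bicol s_lin /first_mono_step_exists [[i j] first_ij].
rewrite (swap_first_monoE first_ij) /=.
case/andP: first_ij => /andP[/= /eqP ej /eqP c_ij] _.
apply: linearization_swap_consecutive => //; apply/negP => le_ij.
by have := bicol _ _ (linearization_consecutive_covers s_lin ej le_ij); rewrite c_ij eqxx.
Qed.

End FirstMonochromaticStep.

Import GRing.Theory.
Local Open Scope ring_scope.

Theorem theorem2p2 (n : nat) (le : rel 'I_n) (color : 'I_n -> bool) :
  is_partial_order le -> is_bicoloring le color ->
  sign_imbalance le = (n_even_comp le color)%:Z - (n_odd_comp le color)%:Z /\
  ((forall s : 'S_n, is_linearization le s -> ~~ compatible color s) ->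
   sign_imbalance le = 0).
Proof.
move=> _ bicol.
pose incompatible s := is_linearization le s && ~~ compatible color s.
have cancel_incompatible :
    #|[set s | incompatible s & ~~ odd_perm s]| = #|[set s | incompatible s & odd_perm s]|.
  apply: (card_sign_involution (f := swap_first_mono color)) => s /andP[s_lin s_inc].
  - by rewrite /incompatible linearization_swap_first_mono ?swap_first_mono_incompatible.
  - exact: swap_first_monoK.
  - exact: odd_swap_first_mono.
have imbalance : sign_imbalance le = (n_even_comp le color)%:Z - (n_odd_comp le color)%:Z.
  rewrite /sign_imbalance /n_even_lin /n_odd_lin.
  rewrite (card_split_pred _ (compatible color) (fun s => ~~ odd_perm s)).
  rewrite (card_split_pred _ (compatible color) (@odd_perm _)) cancel_incompatible.
  by rewrite !PoszD opprD addrACA subrr addr0.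
split => // no_compatible; rewrite imbalance.
suff no_comp (P : pred 'S_n) :
    #|[set s : 'S_n | [&& is_linearization le s, compatible color s & P s]]| = 0%N.
  by rewrite /n_even_comp /n_odd_comp !no_comp.
apply/eqP; rewrite cards_eq0; apply/eqP/setP => s; rewrite !inE.
by case s_lin: (is_linearization le s); rewrite //= (negbTE (no_compatible _ s_lin)).
Qed.
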